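(* Let $(X,d)$ be an $R$-rough geodesic metric space for some $R\ge0$, and let $G$ be a group acting coboundedly on $X$ by isometries. Fix $x_0\in X$. For $t>0$ let $S_{x_0,t}=\{g\in G: d(x_0,gx_0)\le t\}$, let $d_{x_0,t}$ be the word metric on $G$ with respect to $S_{x_0,t}$ multiplied by $t$ (equivalently the graph metric on the graph with vertex set $G$ and an edge of length $t$ between $g$ and $gs$ for each $s\in S_{x_0,t}$), where $d_{x_0,t}(g,h)=\infty$ if $g,h$ lie in different components, and let $f_{x_0,t}\colon(G,d_{x_0,t})\to X$, $g\mapsto gx_0$. Let $K_{x_0,t}$ be the infimum of all $K\ge1$ for which there exists $C_K>0$ such that $f_{x_0,t}$ is a $(K,C_K)$-quasi-isometry (with $K_{x_0,t}=\infty$ if there is no such $K$). Then $K_{x_0,t}\to1$ as $t\to\infty$.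
   Context: $X$ is $R$-rough geodesic if any $x_1,x_2$ are joined by $f\colon[0,\ell]\to X$, $\ell=d(x_1,x_2)$, $f(0)=x_1,f(\ell)=x_2$, with $|d(f(s),f(t))-|s-t||\le R$. The action is cobounded if some (equivalently every) orbit is $D$-dense in $X$ for some $D$. A map $f$ is a $(K,C)$-quasi-isometry if $\frac1Kd(a,b)-C\le d(f(a),f(b))\le Kd(a,b)+C$ for all $a,b$ and every point of the target lies within $C$ of the image. *)

From Stdlib Require Import Reals.
From Coquelicot Require Import Coquelicot.
Open Scope R_scope.

Section Defs.
Variable X : Type.
Variable d : X -> X -> R.

Definition is_metric : Prop :=
  (forall x y, 0 <= d x y) /\ (forall x y, d x y = 0 <-> x = y) /\
  (forall x y, d x y = d y x) /\ (forall x y z, d x z <= d x y + d y z).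

Definition rough_geodesic (Rr : R) : Prop :=
  forall x1 x2, exists f : R -> X,
    f 0 = x1 /\ f (d x1 x2) = x2 /\
    forall s u, 0 <= s <= d x1 x2 -> 0 <= u <= d x1 x2 ->
      Rabs (d (f s) (f u) - Rabs (s - u)) <= Rr.

Variable G : Type.
Variable mul : G -> G -> G.
Variable inv : G -> G.
Variable one : G.

Definition is_group : Prop :=
  (forall a b c, mul a (mul b c) = mul (mul a b) c) /\
  (forall a, mul one a = a) /\ (forall a, mul a one = a) /\
  (forall a, mul (inv a) a = one) /\ (forall a, mul a (inv a) = one).

Variable act : G -> X -> X.

Definition isometric_action : Prop :=
  (forall x, act one x = x) /\
  (forall g h x, act (mul g h) x = act g (act h x)) /\
  (forall g x y, d (act g x) (act g y) = d x y).

Definition cobounded : Prop :=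
  exists z D, forall x, exists g, d x (act g z) <= D.

Definition Sball (x0 : X) (t : R) (g : G) : Prop := d x0 (act g x0) <= t.

Fixpoint reach (S : G -> Prop) (n : nat) (g h : G) : Prop :=
  match n with
  | O => g = h
  | Datatypes.S m => exists s, S s /\ reach S m (mul g s) h
  end.

(** n is the word-length distance between g and h w.r.t. S
    (least number of edges); no such n means distance = infinity. *)
Definition word_len (S : G -> Prop) (g h : G) (n : nat) : Prop :=
  reach S n g h /\ forall m, reach S m g h -> (n <= m)%nat.

(** With an infinite distance the lower
    bound (1/K) d - C <= d(f a, f b) fails, so every pair must be connected;
    the upper bound is then automatic. *)
Definition fQI (x0 : X) (t K C : R) : Prop :=
  (forall a b, (exists n, reach (Sball x0 t) n a b) /\
     forall n, word_len (Sball x0 t) a b n ->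
       / K * (t * INR n) - C <= d (act a x0) (act b x0) <= K * (t * INR n) + C) /\
  (forall y, exists g, d y (act g x0) <= C).

(** Set of admissible K >= 1; K_{x0,t} is its infimum (+oo if empty). *)
Definition Kset (x0 : X) (t : R) (K : R) : Prop :=
  1 <= K /\ exists C, 0 < C /\ fQI x0 t K C.

Definition Kconst (x0 : X) (t : R) : Rbar := Glb_Rbar (Kset x0 t).

End Defs.

From Stdlib Require Import Reals Lra Lia IndefiniteDescription.
From Coquelicot Require Import Coquelicot.
Open Scope R_scope.

(* Put c := R + 2D, where the orbit of x0 is D-dense, and let t > c.  Cut a
   rough geodesic from a x0 to b x0 into pieces of length at most l := t - c
   and move every cut point to an orbit point at distance at most D.
   Consecutive orbit points are then at most l + R + 2D = t apart, so a and b
   are joined by a path of at most d(a x0, b x0)/l + 1 edges of S_{x0,t}.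
   Hence (t/l)^-1 d_{x0,t} - l <= d(a x0, b x0) <= d_{x0,t}, so f_{x0,t} is a
   (t/l, t + D)-quasi-isometry, and t/l = t/(t - c) tends to 1. *)

Section CayleyPaths.

Variables (G : Type) (mul : G -> G -> G) (inv : G -> G) (one : G).
Hypothesis group_G : is_group G mul inv one.

Lemma mul_inv_cancel_l (g h : G) : mul g (mul (inv g) h) = h.
Proof.
  destruct group_G as [mulA [mul1g [_ [_ mulgV]]]].
  now rewrite mulA, mulgV, mul1g.
Qed.

Lemma reach_chain (S : G -> Prop) (m : nat) (g : nat -> G) :
  (forall k, (k < m)%nat -> S (mul (inv (g k)) (g (Datatypes.S k)))) ->
  reach G mul S m (g O) (g m).
Proof.
  revert g; induction m as [|m IH]; intros g Hstep; simpl.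
  - reflexivity.
  - exists (mul (inv (g O)) (g 1%nat)); split.
    + apply Hstep; lia.
    + rewrite mul_inv_cancel_l.
      apply (IH (fun k => g (Datatypes.S k))).
      intros k Hk; apply Hstep; lia.
Qed.

End CayleyPaths.

Section RoughGeodesics.

Variables (X : Type) (d : X -> X -> R) (Rr : R).
Hypothesis metric_d : is_metric X d.
Hypothesis rough_d : rough_geodesic X d Rr.

Lemma rough_geodesic_chain (l : R) (x y : X) : 0 < l ->
  exists (m : nat) (p : nat -> X),
    (0 < m)%nat /\ p O = x /\ p m = y /\
    (forall k, (k < m)%nat -> d (p k) (p (Datatypes.S k)) <= l + Rr) /\
    INR m <= d x y / l + 1.
Proof.
  intros Hl.
  destruct (rough_d x y) as [f [f0 [fL Hf]]].
  set (L := d x y) in *.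
  assert (HL : 0 <= L) by apply metric_d.
  destruct (nfloor_ex (L / l)) as [n [Hn_le Hn_gt]].
  { apply Rdiv_le_0_compat; lra. }
  set (M := INR (Datatypes.S n)).
  assert (HM : M = INR n + 1) by apply S_INR.
  assert (HM0 : 0 < M) by (pose proof (pos_INR n); lra).
  set (step := L / M).
  assert (Hstep : 0 <= step <= l).
  { unfold step; split.
    - apply Rdiv_le_0_compat; lra.
    - apply Rle_div_l; [lra|].
      apply Rlt_div_l in Hn_gt; [rewrite HM; lra | exact Hl]. }
  assert (Hrange : forall k, (k <= Datatypes.S n)%nat -> 0 <= INR k * step <= L).
  { intros k Hk; apply le_INR in Hk; fold M in Hk.
    pose proof (pos_INR k).
    assert (HL_step : L = M * step) by (unfold step; field; lra).
    split; nra. }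
  exists (Datatypes.S n), (fun k => f (INR k * step)); repeat split.
  - lia.
  - now rewrite Rmult_0_l.
  - fold M; unfold step.
    replace (M * (L / M)) with L by (field; lra); exact fL.
  - intros k Hk.
    specialize (Hf _ _ (Hrange k ltac:(lia)) (Hrange (Datatypes.S k) Hk)).
    rewrite S_INR in Hf |- *.
    replace (INR k * step - (INR k + 1) * step) with (- step) in Hf by ring.
    rewrite Rabs_Ropp, (Rabs_pos_eq step) in Hf by lra.
    apply Rabs_le_between in Hf; lra.
  - fold M; lra.
Qed.

End RoughGeodesics.

Section OrbitMap.

Variables (X : Type) (d : X -> X -> R).
Variables (G : Type) (mul : G -> G -> G) (inv : G -> G) (one : G).
Variables (act : G -> X -> X) (x0 : X).
Hypothesis metric_d : is_metric X d.
Hypothesis group_G : is_group G mul inv one.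
Hypothesis action : isometric_action X d G mul one act.

Lemma dist_orbit_div (g h : G) :
  d x0 (act (mul (inv g) h) x0) = d (act g x0) (act h x0).
Proof.
  destruct action as [_ [act_mul act_isom]].
  now rewrite <- (act_isom g), <- act_mul, (mul_inv_cancel_l G mul inv one).
Qed.

Lemma dist_orbit_reach_le (t : R) (n : nat) (a b : G) :
  reach G mul (Sball X d G act x0 t) n a b ->
  d (act a x0) (act b x0) <= t * INR n.
Proof.
  destruct metric_d as [_ [d_eq0 [_ d_tri]]].
  destruct action as [_ [act_mul act_isom]].
  revert a; induction n as [|n IH]; intros a Hreach; simpl in Hreach.
  - subst b; rewrite (proj2 (d_eq0 _ _) eq_refl); simpl; lra.
  - destruct Hreach as [s [Hs Hreach]].
    assert (Hedge : d (act a x0) (act (mul a s) x0) <= t)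
      by (rewrite act_mul, act_isom; exact Hs).
    specialize (IH _ Hreach).
    pose proof (d_tri (act a x0) (act (mul a s) x0) (act b x0)).
    rewrite S_INR; lra.
Qed.

Lemma cobounded_orbit_dense : cobounded X d G act ->
  exists D, 0 <= D /\ forall y, exists g, d y (act g x0) <= D.
Proof.
  destruct metric_d as [d_ge0 [_ [_ d_tri]]].
  destruct action as [_ [_ act_isom]].
  intros [z [D Hz]].
  exists (D + d z x0); split.
  - destruct (Hz x0) as [g Hg].
    pose proof (d_ge0 x0 (act g z)); pose proof (d_ge0 z x0); lra.
  - intros y; destruct (Hz y) as [g Hg]; exists g.
    pose proof (d_tri y (act g z) (act g x0)).
    rewrite act_isom in *; lra.
Qed.

Variables (Rr D : R).
Hypothesis Rr_ge0 : 0 <= Rr.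
Hypothesis rough_d : rough_geodesic X d Rr.
Hypothesis D_ge0 : 0 <= D.
Hypothesis orbit_dense : forall y, exists g, d y (act g x0) <= D.

Lemma reach_Sball_le (l t : R) (a b : G) : 0 < l -> l + Rr + 2 * D <= t ->
  exists m, reach G mul (Sball X d G act x0 t) m a b /\
    INR m <= d (act a x0) (act b x0) / l + 1.
Proof.
  intros Hl Ht.
  pose proof metric_d as [_ [d_eq0 [d_sym d_tri]]].
  destruct (rough_geodesic_chain X d Rr metric_d rough_d l (act a x0) (act b x0) Hl)
    as [m [p [Hm0 [p0 [pm [Hp Hm]]]]]].
  destruct (functional_choice _ orbit_dense) as [shadow Hshadow].
  set (g k := if Nat.eqb k 0 then a else if Nat.eqb k m then b else shadow (p k)).
  assert (Hg : forall k, d (p k) (act (g k) x0) <= D).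
  { intros k; unfold g.
    destruct (Nat.eqb_spec k 0) as [->|_]; [|destruct (Nat.eqb_spec k m) as [->|_]].
    - rewrite p0, (proj2 (d_eq0 _ _) eq_refl); exact D_ge0.
    - rewrite pm, (proj2 (d_eq0 _ _) eq_refl); exact D_ge0.
    - apply Hshadow. }
  exists m; split; [|exact Hm].
  replace b with (g m) by (unfold g; destruct m; [lia|now rewrite Nat.eqb_refl]).
  change a with (g O); apply (reach_chain G mul inv one group_G).
  intros k Hk; unfold Sball; rewrite dist_orbit_div.
  pose proof (Hp k Hk) as Hstep.
  pose proof (Hg k) as Hstart; rewrite d_sym in Hstart.
  pose proof (Hg (Datatypes.S k)) as Hend.
  pose proof (d_tri (act (g k) x0) (p k) (act (g (Datatypes.S k)) x0)).
  pose proof (d_tri (p k) (p (Datatypes.S k)) (act (g (Datatypes.S k)) x0)).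
  lra.
Qed.

Lemma Kset_ratio (t : R) : Rr + 2 * D < t ->
  Kset X d G mul act x0 t (t / (t - (Rr + 2 * D))).
Proof.
  intros Ht.
  set (l := t - (Rr + 2 * D)).
  assert (Hl : 0 < l) by (unfold l; lra).
  assert (Hlt : l <= t) by (unfold l; lra).
  split; [apply Rle_div_r; lra|].
  exists (t + D); split; [lra|split].
  - intros a b.
    destruct (reach_Sball_le l t a b Hl ltac:(unfold l; lra)) as [m [Hreach Hm]].
    split; [now exists m|].
    intros n [Hn Hmin].
    pose proof (le_INR _ _ (Hmin m Hreach)).
    pose proof (dist_orbit_reach_le t n a b Hn).
    pose proof (pos_INR n).
    set (L := d (act a x0) (act b x0)) in *.
    assert (HmL : l * INR m <= L + l).
    { apply (Rmult_le_compat_l l) in Hm; [|lra].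
      replace (l * (L / l + 1)) with (L + l) in Hm by (field; lra); exact Hm. }
    replace (/ (t / l)) with (l / t) by (field; lra).
    split.
    + replace (l / t * (t * INR n)) with (l * INR n) by (field; lra); nra.
    + assert (1 <= t / l) by (apply Rle_div_r; lra); nra.
  - intros y; destruct (orbit_dense y) as [g Hg]; exists g; lra.
Qed.

End OrbitMap.

Lemma Kconst_ge_1 (X : Type) (d : X -> X -> R) (G : Type) (mul : G -> G -> G)
  (act : G -> X -> X) (x0 : X) (t : R) :
  Rbar_le 1 (Kconst X d G mul act x0 t).
Proof.
  apply (Glb_Rbar_correct (Kset X d G mul act x0 t)).
  intros K [HK _]; exact HK.
Qed.

Lemma Kconst_le (X : Type) (d : X -> X -> R) (G : Type) (mul : G -> G -> G)
  (act : G -> X -> X) (x0 : X) (t K : R) :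
  Kset X d G mul act x0 t K -> Rbar_le (Kconst X d G mul act x0 t) K.
Proof. apply (Glb_Rbar_correct (Kset X d G mul act x0 t)). Qed.

Theorem lemma5p2
  (X : Type) (d : X -> X -> R) (Rr : R)
  (G : Type) (mul : G -> G -> G) (inv : G -> G) (one : G)
  (act : G -> X -> X) (x0 : X) :
  is_metric X d -> 0 <= Rr -> rough_geodesic X d Rr ->
  is_group G mul inv one -> isometric_action X d G mul one act ->
  cobounded X d G act ->
  forall eps, 0 < eps -> exists T, forall t, T < t ->
    Rbar_le (Finite 1) (Kconst X d G mul act x0 t) /\
    Rbar_lt (Kconst X d G mul act x0 t) (Finite (1 + eps)).
Proof.
  intros metric_d Rr_ge0 rough_d group_G action cobounded_G eps Heps.
  destruct (cobounded_orbit_dense X d G mul one act x0 metric_d action cobounded_G)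
    as [D [D_ge0 orbit_dense]].
  set (c := Rr + 2 * D).
  exists ((1 + eps) * c / eps); intros t Ht.
  apply Rlt_div_l in Ht; [|lra].
  assert (Hct : c < t) by (unfold c in *; nra).
  split; [apply Kconst_ge_1|].
  apply Rbar_le_lt_trans with (t / (t - c)).
  - apply Kconst_le, (Kset_ratio X d G mul inv one act x0 metric_d group_G action Rr D);
      assumption.
  - simpl; apply Rlt_div_l; [lra|]; nra.
Qed.
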